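(* For every integer $l\ge -1$ and every integer $n\ge1$, the subset $S'_{l,l+n}=\mu(S_l\cap S_{l+n})\subset M$ is an invariant submanifold of the KP equations $\partial_{t_j}h=\partial_xH^{(j)}$, $j\ge1$ (i.e. all KP flows are tangent to it).
   Context: Let $x$ be a space variable; all coefficients below are functions of $x$, and a subscript $x$ denotes $\partial_x$. Let $M$ be the affine space of formal Laurent series $h(z)=z+\sum_{j\ge1}h_j z^{-j}$, $A$ the affine space of formal Laurent series $a(z)=z+\sum_{j\ge0}a_j z^{-j}$, and $N=M\times A$. The Faà di Bruno iterates of $h$ are $h^{(0)}=1$, $h^{(j+1)}=(\partial_x+h)h^{(j)}=\partial_x h^{(j)}+h\,h^{(j)}$ for $j\ge0$. For $j\ge0$, the KP current $H^{(j)}$ is the unique Laurent series of the form $H^{(j)}=h^{(j)}+\sum_{l=0}^{j-2}p^j_l[h]\,h^{(l)}$, with the $p^j_l[h]$ differential polynomials in the $h_i$ (independent of $z$), such that $H^{(j)}=z^j+O(z^{-1})$ as $z\to\infty$. The KP equations are $\partial_{t_j}h=\partial_x H^{(j)}$. The maps $\mu,\sigma:N\to M$ are $\mu(h,a)=h$ and $\sigma(h,a)=h+a_x/a$. The DKP equations on $N$ are $\partial_{t_j}h=\partial_xH^{(j)}$, $\partial_{t_j}a=a(\tilde H^{(j)}-H^{(j)})$, where $\tilde H^{(j)}$ is $H^{(j)}$ evaluated at $\sigma(h,a)$. For an integer $l\ge-1$, $S_l\subset N$ is the set of pairs $(h,a)$ satisfying $z^l a=H^{(l+1)}+\sum_{m=0}^{l}a_mH^{(l-m)}$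 (for $l=-1$ the sum is empty, so $S_{-1}=\{a=z\}$). It is known that every DKP vector field is tangent to every $S_l$. *)

From HB Require Import structures.
From mathcomp Require Import all_boot all_order all_algebra.
Set Implicit Arguments. Unset Strict Implicit. Unset Printing Implicit Defensive.
Import Order.TTheory GRing.Theory Num.Theory.
Local Open Scope ring_scope.

(* Formal Laurent series in z (with finitely many positive powers) over a
   commutative ring R equipped with a map D (the derivation d/dx).
   A series is given by an upper bound [ls_top] on its degree and a
   coefficient function; coefficients above [ls_top] are ignored. *)
Section LaurentSeries.
Variables (R : comNzRingType) (D : R -> R).

Record LS := mkLS { ls_top : int; ls_co : int -> R }.

Definition coef (f : LS) (k : int) : R :=
  if k <= ls_top f then ls_co f k else 0.

Definition ls_eq (f g : LS) : Prop := forall k : int, coef f k = coef g k.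

Definition ls_zero : LS := mkLS 0 (fun _ => 0).
Definition lsZ (m : int) : LS := mkLS m (fun k => (k == m)%:R).
Definition ls_add (f g : LS) : LS :=
  mkLS (Num.max (ls_top f) (ls_top g)) (fun k => coef f k + coef g k).
Definition ls_scale (c : R) (f : LS) : LS :=
  mkLS (ls_top f) (fun k => c * coef f k).
Definition ls_sub (f g : LS) : LS := ls_add f (ls_scale (-1) g).
Definition ls_mul (f g : LS) : LS :=
  mkLS (ls_top f + ls_top g)
    (fun k => \sum_(i < (absz (ls_top f + ls_top g - k)%R).+1)
                 coef f (ls_top f - i%:Z) * coef g (k - ls_top f + i%:Z)).
Definition ls_der (f : LS) : LS := mkLS (ls_top f) (fun k => D (coef f k)).

(* h = z + sum_{j>=1} h_j z^{-j}, encoded by u with u i = h_{i+1} *)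
Definition hser (u : nat -> R) : LS :=
  mkLS 1 (fun k => if k == 1 then 1
                   else if k <= -1 then u (absz (- k)).-1 else 0).
(* a = z + sum_{j>=0} a_j z^{-j}, encoded by a with a j = a_j *)
Definition aser (a : nat -> R) : LS :=
  mkLS 1 (fun k => if k == 1 then 1 else if k <= 0 then a (absz (- k)) else 0).

Fixpoint fdb (u : nat -> R) (j : nat) : LS :=
  match j with
  | 0 => lsZ 0
  | j'.+1 => ls_add (ls_der (fdb u j')) (ls_mul (hser u) (fdb u j'))
  end.

(* Triangular reduction: successively kills the coefficients of
   z^(l-1), ..., z^0 by subtracting multiples of h^(l-1), ..., h^(0). *)
Fixpoint kpred (u : nat -> R) (F : LS) (l : nat) : LS :=
  match l with
  | 0 => F
  | l'.+1 => kpred u (ls_sub F (ls_scale (coef F l'%:Z) (fdb u l'))) l'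
  end.

(* KP current H^(j): the unique h^(j) + sum_{l<=j-2} p_l h^(l)
   with H^(j) = z^j + O(z^{-1}) *)
Definition KPcur (u : nat -> R) (j : nat) : LS := kpred u (fdb u j) j.

(* The KP vector field d/dt_j h = d/dx H^(j), as coefficients:
   i-th component = coefficient of z^{-(i+1)} *)
Definition KPvec (u : nat -> R) (j : nat) : nat -> R :=
  fun i => coef (ls_der (KPcur u j)) (- (i.+1)%:Z).

(* The two sides of the defining equation of S_l:
   z^l a = H^(l+1) + sum_{m=0}^{l} a_m H^(l-m) *)
Definition S_lhs (l : int) (a : nat -> R) : LS := ls_mul (lsZ l) (aser a).
Definition S_rhs (l : int) (u : nat -> R) (a : nat -> R) : LS :=
  let k := absz (l + 1) in
  ls_add (KPcur u k)
         (\big[ls_add/ls_zero]_(m < k) ls_scale (a m) (KPcur u (k.-1 - m))).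

Definition in_S (l : int) (u a : nat -> R) : Prop := ls_eq (S_lhs l a) (S_rhs l u a).

Definition in_Sp (l : int) (n : nat) (u : nat -> R) : Prop :=
  exists a : nat -> R, in_S l u a /\ in_S (l + n%:Z) u a.

End LaurentSeries.

Definition ls_eq2 (R : comNzRingType) (f g : LS {poly R}) : Prop :=
  forall (k : int) (i : nat), (i < 2)%N -> (coef f k)`_i = (coef g k)`_i.

(* First-order (dual-number) tangency: the KP vector field X_j at h is
   tangent to S'_{l,l+n} at h iff h + t X_j(h) lifts, modulo t^2, to a point
   of S_l cap S_{l+n} (over R[t]/(t^2), with d/dx extended coefficientwise). *)
Definition KP_tangent (R : comNzRingType) (D : R -> R) (l : int) (n : nat)
    (j : nat) (u : nat -> R) : Prop :=
  exists aT : nat -> {poly R},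
    let hT := fun i => (u i)%:P + (KPvec D u j i)%:P * 'X in
    ls_eq2 (S_lhs l aT) (S_rhs (map_poly D) l hT aT) /\
    ls_eq2 (S_lhs (l + n%:Z) aT) (S_rhs (map_poly D) (l + n%:Z) hT aT).

(* To first order, the KP flow [h -> h + eps d/dx H], [H = H^(j)], is the gauge
   transformation [nabla -> (1 - eps H) nabla (1 + eps H)] of [nabla = d/dx + h]:
   since [eps^2 = 0], this conjugate is [d/dx + h + eps d/dx H].
   A pair [(h, a)] lies in [S_l] iff [z^l a] lies in the span [V_h] of the
   Faa di Bruno iterates [nabla^m 1 = z^m + ...]: the defining equation only
   fixes nonnegative degrees, and an element of [V_h] is determined by them.
   Pick a constant-coefficient operator [C = sum_m c_m nabla^m] with
   [B = C a - H a = O(z^0)] and put [a' = a + eps B]; then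
   [z^l a' = (1 - eps H) z^l a + eps C (z^l a)] lies in [V_(h + eps d/dx H)].
   As [a'] does not depend on [l], the deformed [h] lifts to [S_l] and [S_(l+n)]
   simultaneously.  All of this is exact over the dual numbers [R[t]/(t^2)],
   and is transported back to [R[t]] modulo [t^2]. *)

From HB Require Import structures.
From mathcomp Require Import all_boot all_order all_algebra.
From mathcomp Require Import boolp.
From mathcomp Require Import zify ring.
Set Implicit Arguments. Unset Strict Implicit. Unset Printing Implicit Defensive.
Import Order.TTheory GRing.Theory Num.Theory.
Local Open Scope ring_scope.

Definition vanish_above (V : nmodType) (f : int -> V) (T : int) :=
  forall k, T < k -> f k = 0.

Lemma vanish_above_le (V : nmodType) (f : int -> V) T T' :
  vanish_above f T -> T <= T' -> vanish_above f T'.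
Proof. by move=> fT le k lt; apply: fT; lia. Qed.

Section Convolution.
Variable K : comNzRingType.
Implicit Types (f g : int -> K) (T S k : int).

Definition lconv f g T S k : K :=
  if k <= T + S then
    \sum_(i < (absz (T + S - k)%R).+1) f (T - i%:Z) * g (k - T + i%:Z)
  else 0.

Lemma lconv_out f g T S k : T + S < k -> lconv f g T S k = 0.
Proof. by rewrite /lconv => lt; case: ifP => //; lia. Qed.

Lemma lconvDl f1 f2 g T S k :
  lconv (fun x => f1 x + f2 x) g T S k = lconv f1 g T S k + lconv f2 g T S k.
Proof.
rewrite /lconv; case: ifP => _; last by rewrite addr0.
by rewrite -big_split; apply: eq_bigr => i _; rewrite mulrDl.
Qed.

Lemma lconv_leftS f g T S k :
  vanish_above f T -> lconv f g (T + 1) S k = lconv f g T S k.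
Proof.
move=> fT; rewrite /lconv.
have [kTS|kTS] := boolP (k <= T + S).
  have -> : k <= T + 1 + S by lia.
  have -> : absz (T + 1 + S - k)%R = (absz (T + S - k)%R).+1 by lia.
  rewrite big_ord_recl fT ?mul0r ?add0r; last by rewrite /=; lia.
  apply: eq_bigr => i _; rewrite /bump /=; have -> : bump 0 i = i.+1 by [].
  by congr (f _ * g _); lia.
case: ifP => // kT1S.
have -> : absz (T + 1 + S - k)%R = 0%N by lia.
by rewrite big_ord1 fT ?mul0r //=; lia.
Qed.

Lemma lconv_rightS f g T S k :
  vanish_above g S -> lconv f g T (S + 1) k = lconv f g T S k.
Proof.
move=> gS; rewrite /lconv.
have [kTS|kTS] := boolP (k <= T + S).
  have -> : k <= T + (S + 1) by lia.
  have -> : absz (T + (S + 1) - k)%R = (absz (T + S - k)%R).+1 by lia.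
  by rewrite big_ord_recr /= gS ?mulr0 ?addr0 //; lia.
case: ifP => // kTS1.
have -> : absz (T + (S + 1) - k)%R = 0%N by lia.
by rewrite big_ord1 gS ?mulr0 //=; lia.
Qed.

Lemma lconv_bounds f g T S T' S' k :
  vanish_above f T -> vanish_above g S ->
  vanish_above f T' -> vanish_above g S' ->
  lconv f g T S k = lconv f g T' S' k.
Proof.
have grow_left A (d : nat) C : vanish_above f A ->
    lconv f g (A + d%:Z) C k = lconv f g A C k.
  move=> fA; elim: d => [|d IH]; first by rewrite addr0.
  have -> : A + d.+1%:Z = A + d%:Z + 1 by lia.
  rewrite lconv_leftS ?IH //.
  by apply: vanish_above_le fA _; lia.
have grow_right A (d : nat) C : vanish_above g A ->
    lconv f g C (A + d%:Z) k = lconv f g C A k.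
  move=> gA; elim: d => [|d IH]; first by rewrite addr0.
  have -> : A + d.+1%:Z = A + d%:Z + 1 by lia.
  rewrite lconv_rightS ?IH //.
  by apply: vanish_above_le gA _; lia.
have left A B C : vanish_above f A -> vanish_above f B ->
    lconv f g A C k = lconv f g B C k.
  move=> fA fB; have [AB|BA] := lerP A B.
    by rewrite -(grow_left A (absz (B - A)%R)) //; congr lconv; lia.
  by rewrite -(grow_left B (absz (A - B)%R)) //; congr lconv; lia.
have right A B C : vanish_above g A -> vanish_above g B ->
    lconv f g C A k = lconv f g C B k.
  move=> gA gB; have [AB|BA] := lerP A B.
    by rewrite -(grow_right A (absz (B - A)%R)) //; congr lconv; lia.
  by rewrite -(grow_right B (absz (A - B)%R)) //; congr lconv; lia.
by move=> fT gS fT' gS'; rewrite (left T T') // (right S S').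
Qed.

(* Product coefficients are coefficients of products of polynomials in [z^-1]
   (truncations below the top degrees); associativity and commutativity of the
   series product are inherited from [{poly K}] this way. *)
Definition lwindow f T (M : nat) : {poly K} := \poly_(i < M) f (T - i%:Z).

Lemma lconv_window f g T S M (i : nat) :
  (i < M)%N -> lconv f g T S (T + S - i%:Z) = (lwindow f T M * lwindow g S M)`_i.
Proof.
move=> iM; rewrite coefM /lconv.
have -> : T + S - i%:Z <= T + S by lia.
have -> : absz (T + S - (T + S - i%:Z))%R = i by lia.
apply: eq_bigr => j _; rewrite !coef_poly.
have jM : (j < M)%N by have := ltn_ord j; lia.
have ijM : (i - j < M)%N by lia.
by rewrite jM ijM; congr (_ * g _); have := ltn_ord j; lia.
Qed.

End Convolution.

(* Series [sum_k lcoef k z^k] with finitely many positive powers.  Unlike [LS],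
   no upper bound is part of the data, so equality is coefficientwise. *)
Record lseries (K : comNzRingType) := LSeries {
  lcoef : int -> K;
  lcoef_bounded : exists T, vanish_above lcoef T }.

HB.instance Definition _ K := gen_eqMixin (lseries K).
HB.instance Definition _ K := gen_choiceMixin (lseries K).

Section LSeriesRing.
Variable K : comNzRingType.
Implicit Types f g h : lseries K.

Lemma lseriesP f g : lcoef f =1 lcoef g -> f = g.
Proof.
case: f g => f fb [g gb] /= /funext efg; subst g.
by congr LSeries; apply: Prop_irrelevance.
Qed.

Definition ltop f : int := sval (cid (lcoef_bounded f)).

Lemma ltopP f : vanish_above (lcoef f) (ltop f).
Proof. exact: svalP (cid (lcoef_bounded f)). Qed.
Arguments ltopP : clear implicits.

Definition lseries_of (c : int -> K) (T : int) (cT : vanish_above c T) :=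
  LSeries (ex_intro _ T cT).

Fact lzero_subproof : vanish_above (fun _ => 0 : K) 0. Proof. by []. Qed.
Definition lzero := lseries_of lzero_subproof.

Fact ladd_subproof f g :
  vanish_above (fun k => lcoef f k + lcoef g k) (Num.max (ltop f) (ltop g)).
Proof.
move=> k; rewrite gt_max => /andP[ltf ltg].
by rewrite (ltopP f) ?(ltopP g) ?addr0.
Qed.
Definition ladd f g := lseries_of (@ladd_subproof f g).

Fact lopp_subproof f : vanish_above (fun k => - lcoef f k) (ltop f).
Proof. by move=> k lt; rewrite ltopP ?oppr0. Qed.
Definition lopp f := lseries_of (@lopp_subproof f).

Fact lmono_subproof (c : K) (m : int) :
  vanish_above (fun k => if k == m then c else 0) m.
Proof. by move=> k lt; case: eqP => //; lia. Qed.
Definition lmono c m := lseries_of (@lmono_subproof c m).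

Fact lmul_subproof f g :
  vanish_above (lconv (lcoef f) (lcoef g) (ltop f) (ltop g)) (ltop f + ltop g).
Proof. by move=> k; apply: lconv_out. Qed.
Definition lmul f g := lseries_of (@lmul_subproof f g).

Lemma lcoefM f g T S k :
  vanish_above (lcoef f) T -> vanish_above (lcoef g) S ->
  lcoef (lmul f g) k = lconv (lcoef f) (lcoef g) T S k.
Proof. by move=> fT gS; apply: lconv_bounds => //; apply: ltopP. Qed.

Lemma laddA : associative ladd.
Proof. by move=> f g h; apply: lseriesP => k /=; rewrite addrA. Qed.
Lemma laddC : commutative ladd.
Proof. by move=> f g; apply: lseriesP => k /=; rewrite addrC. Qed.
Lemma ladd0 : left_id lzero ladd.
Proof. by move=> f; apply: lseriesP => k /=; rewrite add0r. Qed.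
Lemma laddN : left_inverse lzero lopp ladd.
Proof. by move=> f; apply: lseriesP => k /=; rewrite addNr. Qed.

HB.instance Definition _ := GRing.isZmodule.Build (lseries K) laddA laddC ladd0 laddN.

Lemma vanish_aboveM f g T S :
  vanish_above (lcoef f) T -> vanish_above (lcoef g) S ->
  vanish_above (lcoef (lmul f g)) (T + S).
Proof. by move=> fT gS k lt; rewrite (lcoefM k fT gS) lconv_out. Qed.

Lemma lmulC : commutative lmul.
Proof.
move=> f g; apply: lseriesP => k.
rewrite (lcoefM k (ltopP f) (ltopP g)) (lcoefM k (ltopP g) (ltopP f)).
set T := ltop f; set S := ltop g.
have [le|lt] := lerP k (T + S); last by rewrite !lconv_out //; lia.
set i := absz (T + S - k)%R.
have -> : k = T + S - i%:Z by lia.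
rewrite (lconv_window _ _ _ _ (ltnSn i)) [T + S]addrC.
by rewrite (lconv_window _ _ _ _ (ltnSn i)) mulrC.
Qed.

Lemma lmulA : associative lmul.
Proof.
move=> f g h; apply: lseriesP => k.
have fT := ltopP f; have gT := ltopP g; have hT := ltopP h.
set Tf := ltop f in fT *; set Tg := ltop g in gT *; set Th := ltop h in hT *.
rewrite (lcoefM k fT (vanish_aboveM gT hT)) (lcoefM k (vanish_aboveM fT gT) hT).
have [le|lt] := lerP k (Tf + Tg + Th); last by rewrite !lconv_out //; lia.
set i := absz (Tf + Tg + Th - k)%R.
have -> : k = Tf + (Tg + Th) - i%:Z by lia.
rewrite (lconv_window _ _ _ _ (ltnSn i)) addrA (lconv_window _ _ _ _ (ltnSn i)).
have coefM_low (P Q Q' : {poly K}) :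
    (forall j, (j <= i)%N -> Q`_j = Q'`_j) -> (P * Q)`_i = (P * Q')`_i.
  move=> QQ'; rewrite !coefM; apply: eq_bigr => j _; rewrite QQ' //.
  by have := ltn_ord j; lia.
have window_mul A B TA TB j : vanish_above (lcoef A) TA -> vanish_above (lcoef B) TB ->
    (j <= i)%N -> (lwindow (lcoef (lmul A B)) (TA + TB) i.+1)`_j =
                  (lwindow (lcoef A) TA i.+1 * lwindow (lcoef B) TB i.+1)`_j.
  move=> AT BT ji; rewrite coef_poly ltnS ji (lcoefM _ AT BT).
  exact: lconv_window.
rewrite (coefM_low _ _ _ (fun j => window_mul _ _ _ _ j gT hT)).
rewrite [in RHS]mulrC (coefM_low _ _ _ (fun j => window_mul _ _ _ _ j fT gT)).
by rewrite mulrA mulrC.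
Qed.

Lemma lmulDl : left_distributive lmul ladd.
Proof.
move=> f g h; apply: lseriesP => k.
set T := Num.max (ltop f) (ltop g).
have fT : vanish_above (lcoef f) T by apply: vanish_above_le (ltopP f) _; rewrite le_max lexx.
have gT : vanish_above (lcoef g) T.
  by apply: vanish_above_le (ltopP g) _; rewrite le_max lexx orbT.
have fgT : vanish_above (lcoef (ladd f g)) T by move=> x lt /=; rewrite fT ?gT ?addr0.
rewrite (lcoefM k fgT (ltopP h)) [RHS](_ : _ = lcoef (lmul f h) k + lcoef (lmul g h) k) //.
by rewrite (lcoefM k fT (ltopP h)) (lcoefM k gT (ltopP h)) -lconvDl.
Qed.

Lemma lcoef_lmonoM c m f k : lcoef (lmul (lmono c m) f) k = c * lcoef f (k - m).
Proof.
have mono_m : vanish_above (lcoef (lmono c m)) m := @lmono_subproof c m.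
rewrite (lcoefM k mono_m (ltopP f)) /lconv.
case: ifP => kle; last by rewrite ltopP ?mulr0 //; lia.
rewrite big_ord_recl /= subr0 eqxx addr0 big1 ?addr0 // => i _.
by case: eqP; rewrite ?mul0r //; rewrite /bump /=; lia.
Qed.

Lemma lmul1 : left_id (lmono 1 0) lmul.
Proof. by move=> f; apply: lseriesP => k; rewrite lcoef_lmonoM mul1r subr0. Qed.

Lemma lone_neq0 : lmono 1 0 != lzero.
Proof. by apply/eqP => /(congr1 (fun f => lcoef f 0)) /= /eqP; rewrite oner_eq0. Qed.

HB.instance Definition _ :=
  GRing.Zmodule_isComNzRing.Build (lseries K) lmulA lmulC lmul1 lmulDl lone_neq0.

Definition lconst c := lmono c 0.
Definition lzpow m := lmono 1 m.

Lemma lcoefD f g k : lcoef (f + g) k = lcoef f k + lcoef g k. Proof. by []. Qed.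
Lemma lcoefN f k : lcoef (- f) k = - lcoef f k. Proof. by []. Qed.
Lemma lcoefB f g k : lcoef (f - g) k = lcoef f k - lcoef g k. Proof. by []. Qed.
Lemma lcoef0 k : lcoef 0 k = 0. Proof. by []. Qed.
Lemma lcoef1 k : lcoef 1 k = (k == 0)%:R. Proof. by rewrite /= -mulrb. Qed.

Lemma lcoef_sum I (r : seq I) (P : pred I) (F : I -> lseries K) k :
  lcoef (\sum_(i <- r | P i) F i) k = \sum_(i <- r | P i) lcoef (F i) k.
Proof. exact: (big_morph (fun f => lcoef f k) (fun f g => lcoefD f g k) (lcoef0 k)). Qed.

Lemma lcoefM_top f g T S :
  vanish_above (lcoef f) T -> vanish_above (lcoef g) S ->
  lcoef (f * g) (T + S) = lcoef f T * lcoef g S.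
Proof.
move=> fT gS; rewrite (lcoefM _ fT gS) /lconv lexx.
have -> : absz (T + S - (T + S))%R = 0%N by lia.
by rewrite big_ord1 /= subr0; congr (_ * lcoef g _); lia.
Qed.

Lemma lcoef_constM c f k : lcoef (lconst c * f) k = c * lcoef f k.
Proof. by rewrite lcoef_lmonoM subr0. Qed.

Lemma lcoef_zpowM m f k : lcoef (lzpow m * f) k = lcoef f (k - m).
Proof. by rewrite lcoef_lmonoM mul1r. Qed.

Lemma lcoef_const c k : lcoef (lconst c) k = if k == 0 then c else 0.
Proof. by []. Qed.

Lemma lconst_is_zmod_morphism : zmod_morphism lconst.
Proof.
by move=> a b; apply: lseriesP => k; rewrite lcoefB !lcoef_const; case: eqP; rewrite ?subr0.
Qed.

Lemma lconst_is_monoid_morphism : monoid_morphism lconst.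
Proof.
split=> // a b; apply: lseriesP => k.
by rewrite lcoef_constM !lcoef_const; case: eqP; rewrite ?mulr0.
Qed.

HB.instance Definition _ :=
  GRing.isZmodMorphism.Build K (lseries K) lconst lconst_is_zmod_morphism.
HB.instance Definition _ :=
  GRing.isMonoidMorphism.Build K (lseries K) lconst lconst_is_monoid_morphism.

End LSeriesRing.

Arguments ltopP {K} f.

Definition derivation (K : comNzRingType) (D : K -> K) :=
  {morph D : x y / x + y} /\ forall x y, D (x * y) = D x * y + x * D y.

Section Derivation.
Variables (K : comNzRingType) (D : K -> K).
Hypothesis hD : derivation D.

Lemma derD x y : D (x + y) = D x + D y. Proof. exact: hD.1. Qed.
Lemma derM x y : D (x * y) = D x * y + x * D y. Proof. exact: hD.2. Qed.

Lemma der0 : D 0 = 0.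
Proof. by apply: (addrI (D 0)); rewrite -derD !addr0. Qed.

Lemma der1 : D 1 = 0.
Proof.
have := derM 1 1; rewrite !mulr1 mul1r => D1.
by apply: (addrI (D 1)); rewrite addr0 -D1.
Qed.

Lemma der_natr n : D n%:R = 0.
Proof. by elim: n => [|n IH]; [exact: der0 | rewrite mulrS derD der1 IH addr0]. Qed.

Lemma der_sum I (r : seq I) (P : pred I) (F : I -> K) :
  D (\sum_(i <- r | P i) F i) = \sum_(i <- r | P i) D (F i).
Proof. exact: (big_morph D derD der0). Qed.

Lemma map_poly_derivation : derivation (map_poly D : {poly K} -> {poly K}).
Proof.
split=> [p q|p q]; apply/polyP => i; rewrite !coef_map_id0 ?der0 //.
  by rewrite !coefD derD !coef_map_id0 ?der0.
rewrite !coefD !coefM der_sum -big_split; apply: eq_bigr => j _.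
by rewrite derM !coef_map_id0 ?der0.
Qed.

End Derivation.

Section SeriesDerivation.
Variables (K : comNzRingType) (D : K -> K).
Implicit Types f g : lseries K.

(* The truncation makes [lder] total without assuming [D 0 = 0]. *)
Fact lder_subproof f :
  vanish_above (fun k => if k <= ltop f then D (lcoef f k) else 0) (ltop f).
Proof. by move=> k lt; case: ifP => //; lia. Qed.
Definition lder f := lseries_of (@lder_subproof f).

Hypothesis hD : derivation D.

Lemma lcoef_der f k : lcoef (lder f) k = D (lcoef f k).
Proof. by rewrite /=; case: ifP => // lt; rewrite ltopP ?(der0 hD) //; lia. Qed.

Lemma vanish_above_der f T :
  vanish_above (lcoef f) T -> vanish_above (lcoef (lder f)) T.
Proof. by move=> fT k lt; rewrite lcoef_der fT ?(der0 hD). Qed.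

Lemma lderD f g : lder (f + g) = lder f + lder g.
Proof. by apply: lseriesP => k; rewrite lcoefD !lcoef_der lcoefD (derD hD). Qed.

Lemma lder_const c : lder (lconst c) = lconst (D c).
Proof.
apply: lseriesP => k; rewrite lcoef_der !lcoef_const.
by case: eqP; rewrite ?(der0 hD).
Qed.

Lemma lder_zpow m : lder (lzpow K m) = 0.
Proof. by apply: lseriesP => k; rewrite lcoef_der lcoef0 /= -mulrb (der_natr hD). Qed.

Lemma lderM f g : lder (f * g) = lder f * g + f * lder g.
Proof.
apply: lseriesP => k; have fT := ltopP f; have gT := ltopP g.
rewrite lcoef_der lcoefD (lcoefM _ fT gT) (lcoefM _ (vanish_above_der fT) gT).
rewrite (lcoefM _ fT (vanish_above_der gT)) /lconv; case: ifP => _; last by rewrite (der0 hD) addr0.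
rewrite (der_sum hD) -big_split; apply: eq_bigr => i _.
by rewrite (derM hD) !lcoef_der.
Qed.

End SeriesDerivation.

Section SeriesMap.
Variables (K1 K2 : comNzRingType) (f : {rmorphism K1 -> K2}).
Implicit Types s t : lseries K1.

Fact lmap_subproof s : vanish_above (fun k => f (lcoef s k)) (ltop s).
Proof. by move=> k lt; rewrite ltopP ?rmorph0. Qed.
Definition lmap s := lseries_of (@lmap_subproof s).

Lemma lcoef_map s k : lcoef (lmap s) k = f (lcoef s k). Proof. by []. Qed.

Lemma lmap_is_zmod_morphism : zmod_morphism lmap.
Proof. by move=> s t; apply: lseriesP => k; rewrite lcoefB !lcoef_map lcoefB rmorphB. Qed.

Lemma lmap_is_monoid_morphism : monoid_morphism lmap.
Proof.
split=> [|s t]; apply: lseriesP => k; rewrite ?lcoef_map.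
  by rewrite !lcoef1 rmorph_nat.
have sT := ltopP s; have tT := ltopP t.
have fsT : vanish_above (lcoef (lmap s)) (ltop s) := @lmap_subproof s.
have ftT : vanish_above (lcoef (lmap t)) (ltop t) := @lmap_subproof t.
rewrite (lcoefM _ sT tT) (lcoefM _ fsT ftT) /lconv.
by case: ifP; rewrite ?rmorph0 // rmorph_sum; under eq_bigr do rewrite rmorphM.
Qed.

HB.instance Definition _ :=
  GRing.isZmodMorphism.Build (lseries K1) (lseries K2) lmap lmap_is_zmod_morphism.
HB.instance Definition _ :=
  GRing.isMonoidMorphism.Build (lseries K1) (lseries K2) lmap lmap_is_monoid_morphism.

Lemma lmap_const c : lmap (lconst c) = lconst (f c).
Proof. by apply: lseriesP => k; rewrite lcoef_map !lcoef_const; case: eqP; rewrite ?rmorph0. Qed.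

Lemma lmap_zpow m : lmap (lzpow K1 m) = lzpow K2 m.
Proof. by apply: lseriesP => k; rewrite lcoef_map /= -!mulrb rmorph_nat. Qed.

Lemma lmap_der (D1 : K1 -> K1) (D2 : K2 -> K2) s :
  derivation D1 -> derivation D2 -> (forall x, f (D1 x) = D2 (f x)) ->
  lmap (lder D1 s) = lder D2 (lmap s).
Proof.
move=> hD1 hD2 fD; apply: lseriesP => k.
by rewrite lcoef_map (lcoef_der hD1) (lcoef_der hD2) fD.
Qed.

End SeriesMap.

Section SeriesOfLS.
Variable K : comNzRingType.
Implicit Types F G : LS K.

Fact series_subproof F : vanish_above (coef F) (ls_top F).
Proof. by rewrite /coef => k; case: ifP => //; lia. Qed.
Definition series F := lseries_of (@series_subproof F).

Lemma lcoef_series F k : lcoef (series F) k = coef F k. Proof. by []. Qed.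

Lemma vanish_above_series F : vanish_above (lcoef (series F)) (ls_top F).
Proof. exact: series_subproof. Qed.
Arguments vanish_above_series : clear implicits.

Lemma series_eqP F G : ls_eq F G <-> series F = series G.
Proof.
split=> [eFG|eFG k]; first exact: lseriesP.
by rewrite -!lcoef_series eFG.
Qed.

Lemma series_add F G : series (ls_add F G) = series F + series G.
Proof.
apply: lseriesP => k; rewrite lcoefD !lcoef_series {1}/coef /=; case: ifP => // /negbT.
by rewrite -ltNge gt_max => /andP[ltF ltG]; rewrite !series_subproof ?addr0.
Qed.

Lemma series_scale c F : series (ls_scale c F) = lconst c * series F.
Proof.
apply: lseriesP => k; rewrite lcoef_constM !lcoef_series {1}/coef /=.
by case: ifP => // lt; rewrite series_subproof ?mulr0 //; lia.
Qed.

Lemma series_sub F G : series (ls_sub F G) = series F - series G.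
Proof. by rewrite /ls_sub series_add series_scale rmorphN1 mulN1r. Qed.

Lemma series_mul F G : series (ls_mul F G) = series F * series G.
Proof.
by apply: lseriesP => k; rewrite (lcoefM _ (vanish_above_series F) (vanish_above_series G)).
Qed.

Lemma series_lsZ m : series (lsZ K m) = lzpow K m.
Proof. by apply: lseriesP => k; rewrite lcoef_series /coef /=; case: ifP; case: eqP => //; lia. Qed.

Lemma series_big I (r : seq I) (P : pred I) (F : I -> LS K) :
  series (\big[@ls_add K/ls_zero K]_(i <- r | P i) F i) = \sum_(i <- r | P i) series (F i).
Proof.
have series0 : series (ls_zero K) = 0.
  by apply: lseriesP => k; rewrite lcoef_series /coef; case: ifP.
exact: (big_morph series series_add series0).
Qed.

Lemma series_der (D : K -> K) F :
  derivation D -> series (ls_der D F) = lder D (series F).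
Proof.
move=> hD; apply: lseriesP => k; rewrite (lcoef_der hD) !lcoef_series {1}/coef /=.
by case: ifP => // lt; rewrite series_subproof ?(der0 hD) //; lia.
Qed.

End SeriesOfLS.

Arguments vanish_above_series {K} F.

Definition lmonic (K : comNzRingType) (T : int) (g : lseries K) :=
  vanish_above (lcoef g) T /\ lcoef g T = 1.

Definition nabla (K : comNzRingType) (D : K -> K) (h g : lseries K) :=
  lder D g + h * g.

Definition in_span (K : comNzRingType) (D : K -> K) (h g : lseries K) :=
  exists N (c : nat -> K), g = \sum_(m < N) lconst (c m) * iter m (nabla D h) 1.

Section FaaDiBrunoSpan.
Variables (K : comNzRingType) (D : K -> K) (h : lseries K).
Hypothesis hD : derivation D.
Implicit Types f g : lseries K.
Local Notation nabla := (nabla D h).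
Local Notation in_span := (in_span D h).

Lemma nablaD f g : nabla (f + g) = nabla f + nabla g.
Proof. by rewrite /nabla (lderD hD); ring. Qed.

Lemma nabla_sum I (r : seq I) (P : pred I) (F : I -> lseries K) :
  nabla (\sum_(i <- r | P i) F i) = \sum_(i <- r | P i) nabla (F i).
Proof.
have nabla0 : nabla 0 = 0 by apply: (addrI (nabla 0)); rewrite -nablaD !addr0.
exact: (big_morph nabla nablaD nabla0).
Qed.

Lemma nabla_constM c f : nabla (lconst c * f) = lconst (D c) * f + lconst c * nabla f.
Proof. by rewrite /nabla (lderM hD) (lder_const hD); ring. Qed.

Lemma nabla_zpowM m f : nabla (lzpow K m * f) = lzpow K m * nabla f.
Proof. by rewrite /nabla (lderM hD) (lder_zpow hD); ring. Qed.

Lemma iter_nabla_zpowM n m f :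
  iter n nabla (lzpow K m * f) = lzpow K m * iter n nabla f.
Proof. by elim: n => [|n IH] //=; rewrite IH nabla_zpowM. Qed.

Lemma sum_constM_widen N N' (c : nat -> K) (F : nat -> lseries K) : (N <= N')%N ->
  \sum_(m < N) lconst (c m) * F m =
  \sum_(m < N') lconst (if (m < N)%N then c m else 0) * F m.
Proof.
move=> le; rewrite (big_ord_widen _ (fun m => lconst (c m) * F m) le) big_mkcond.
by apply: eq_bigr => i _; case: ifP => //; rewrite rmorph0 mul0r.
Qed.

Lemma span0 : in_span 0.
Proof. by exists 0%N, (fun _ => 0); rewrite big_ord0. Qed.

Lemma spanD f g : in_span f -> in_span g -> in_span (f + g).
Proof.
move=> [N [c ->]] [N' [c' ->]].
exists (maxn N N'), (fun m => (if (m < N)%N then c m else 0) + (if (m < N')%N then c' m else 0)).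
rewrite (sum_constM_widen _ _ (leq_maxl N N')) (sum_constM_widen _ _ (leq_maxr N N')).
by rewrite -big_split; apply: eq_bigr => i _; rewrite rmorphD mulrDl.
Qed.

Lemma span_constM c f : in_span f -> in_span (lconst c * f).
Proof.
move=> [N [c' ->]]; exists N, (fun m => c * c' m); rewrite mulr_sumr.
by apply: eq_bigr => i _; rewrite rmorphM mulrA.
Qed.

Lemma spanB f g : in_span f -> in_span g -> in_span (f - g).
Proof. by move=> sf sg; rewrite -mulN1r -(rmorphN1 (@lconst K)); apply/spanD/span_constM. Qed.

Lemma span_sum I (r : seq I) (P : pred I) (F : I -> lseries K) :
  (forall i, P i -> in_span (F i)) -> in_span (\sum_(i <- r | P i) F i).
Proof. by move=> sF; apply: big_ind => //; [exact: span0 | exact: spanD]. Qed.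

Lemma span_fdb n : in_span (iter n nabla 1).
Proof.
exists n.+1, (fun m => (m == n)%:R); rewrite big_ord_recr /= eqxx rmorph1 mul1r big1 ?add0r //.
by move=> i _; rewrite (ltn_eqF (ltn_ord i)) rmorph0 mul0r.
Qed.

Lemma span_nabla f : in_span f -> in_span (nabla f).
Proof.
move=> [N [c ->]]; rewrite nabla_sum; apply: span_sum => m _.
rewrite nabla_constM; apply: spanD; apply: span_constM; first exact: span_fdb.
by rewrite -iterS; apply: span_fdb.
Qed.

Lemma span_iter_nabla n f : in_span f -> in_span (iter n nabla f).
Proof. by move=> sf; elim: n => [|n IH] //=; apply: span_nabla. Qed.

Hypothesis h_monic : lmonic 1 h.

Lemma lmonic_nabla T f : lmonic T f -> lmonic (T + 1) (nabla f).
Proof.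
case: h_monic => hT h1 [fT f1]; have dfT := vanish_above_der hD fT.
split=> [k lt|]; first by rewrite lcoefD (vanish_aboveM hT fT) ?dfT ?addr0 //; lia.
rewrite lcoefD [T + 1]addrC (lcoefM_top hT fT) h1 f1 mulr1 dfT ?add0r //; lia.
Qed.

Lemma lmonic_iter_nabla T n f : lmonic T f -> lmonic (T + n%:Z) (iter n nabla f).
Proof.
move=> fT; elim: n => [|n IH]; first by rewrite addr0.
have -> : T + n.+1%:Z = T + n%:Z + 1 by lia.
exact: lmonic_nabla.
Qed.

Lemma lmonic_fdb n : lmonic n%:Z (iter n nabla 1).
Proof.
rewrite -[n%:Z]add0r; apply: lmonic_iter_nabla.
by split=> [k lt|]; rewrite lcoef1 //; case: eqP => //; lia.
Qed.

(* The iterates [nabla^m 1 = z^m + ...] are triangular with unit diagonal. *)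
Lemma span_eq0 g : in_span g -> (forall x, 0 <= x -> lcoef g x = 0) -> g = 0.
Proof.
case=> N [c ->]; elim: N => [|N IH] g0; first by rewrite big_ord0.
have low_vanish (d : nat -> K) x : (N <= x)%N ->
    lcoef (\sum_(m < N) lconst (d m) * iter m nabla 1) x%:Z = 0.
  move=> le; rewrite lcoef_sum big1 // => i _.
  by rewrite lcoef_constM (lmonic_fdb i).1 ?mulr0 //; have := ltn_ord i; lia.
have cN : c N = 0.
  move: (g0 N%:Z isT); rewrite big_ord_recr lcoefD lcoef_constM /= (lmonic_fdb N).2.
  by rewrite low_vanish // add0r mulr1.
rewrite big_ord_recr /= cN rmorph0 mul0r addr0; apply: IH => x x0.
by move: (g0 x x0); rewrite big_ord_recr lcoefD lcoef_constM /= cN mul0r addr0.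
Qed.

Lemma span_eq g g' : in_span g -> in_span g' ->
  (forall x, 0 <= x -> lcoef g x = lcoef g' x) -> g = g'.
Proof.
move=> sg sg' gg'; apply/eqP; rewrite -subr_eq0; apply/eqP.
by apply: span_eq0 => [|x x0]; [exact: spanB | rewrite lcoefB gg' ?subrr].
Qed.

Lemma reduce_by_iter_nabla A J G : lmonic 1 A -> vanish_above (lcoef G) J%:Z ->
  exists c : nat -> K,
    vanish_above (lcoef (G - \sum_(m < J) lconst (c m) * iter m nabla A)) 0.
Proof.
move=> A1; elim: J G => [|J IH] G GJ; first by exists (fun _ => 0); rewrite big_ord0 subr0.
have [AJ1 AJ] := lmonic_iter_nabla J A1.
set G' := G - lconst (lcoef G J.+1%:Z) * iter J nabla A.
have G'J : vanish_above (lcoef G') J%:Z.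
  move=> k lt; rewrite lcoefB lcoef_constM.
  have [->|ne] := eqVneq k J.+1%:Z; first by rewrite (_ : J.+1%:Z = 1 + J%:Z) ?AJ ?mulr1 ?subrr //; lia.
  by rewrite GJ ?AJ1 ?mulr0 ?subr0 //; lia.
have [c Hc] := IH G' G'J.
pose c' m := if m == J then lcoef G J.+1%:Z else c m; exists c'.
have -> : \sum_(m < J.+1) lconst (c' m) * iter m nabla A =
    \sum_(m < J) lconst (c m) * iter m nabla A + lconst (lcoef G J.+1%:Z) * iter J nabla A.
  rewrite big_ord_recr /= /c' eqxx; congr (_ + _); apply: eq_bigr => i _.
  by rewrite (ltn_eqF (ltn_ord i)).
by rewrite opprD addrA addrAC.
Qed.

End FaaDiBrunoSpan.

Section KPCurrents.
Variables (K : comNzRingType) (D : K -> K).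
Hypothesis hD : derivation D.
Variable u : nat -> K.
Local Notation h := (series (hser u)).
Local Notation nabla := (nabla D h).
Local Notation in_span := (in_span D h).

Lemma hser_monic : lmonic 1 h.
Proof. by split; [apply: vanish_above_series | rewrite lcoef_series /coef /=]. Qed.

Lemma aser_monic (a : nat -> K) : lmonic 1 (series (aser a)).
Proof. by split; [apply: vanish_above_series | rewrite lcoef_series /coef /=]. Qed.

Lemma series_fdb n : series (fdb D u n) = iter n nabla 1.
Proof.
elim: n => [|n IH] /=; first by rewrite series_lsZ.
by rewrite series_add (series_der _ hD) series_mul IH.
Qed.

Lemma coef_kpred F l x : 0 <= x ->
  coef (kpred D u F l) x = if x < l%:Z then 0 else coef F x.
Proof.
move=> x0; elim: l F => [|l IH] F /=; first by case: ifP => //; lia.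
rewrite IH -!lcoef_series series_sub series_scale series_fdb lcoefB lcoef_constM.
have [fdbl fdbl1] := lmonic_fdb hD hser_monic l.
case: (ltgtP x l%:Z) => [lt|gt|->]; first by case: ifP => //; lia.
  by rewrite ifF ?fdbl ?mulr0 ?subr0 //; lia.
by rewrite ifT ?fdbl1 ?mulr1 ?subrr //; lia.
Qed.

Lemma series_kpred F l : exists c : nat -> K,
  series (kpred D u F l) = series F - \sum_(m < l) lconst (c m) * iter m nabla 1.
Proof.
elim: l F => [|l IH] F /=; first by exists (fun _ => 0); rewrite big_ord0 subr0.
have [c ->] := IH (ls_sub F (ls_scale (coef F l) (fdb D u l))).
exists (fun m => if m == l then coef F l else c m).
rewrite series_sub series_scale series_fdb big_ord_recr /= eqxx opprD addrA addrAC.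
by congr (_ - _ - _); apply: eq_bigr => i _; rewrite (ltn_eqF (ltn_ord i)).
Qed.

Lemma span_KPcur j : in_span (series (KPcur D u j)).
Proof.
have [c ->] := series_kpred (fdb D u j) j.
rewrite series_fdb; apply: spanB; first exact: span_fdb.
by apply: span_sum => m _; apply/span_constM/span_fdb.
Qed.

Lemma coef_KPcur j x : 0 <= x -> coef (KPcur D u j) x = (x == j%:Z)%:R.
Proof.
move=> x0; rewrite /KPcur coef_kpred //; case: ifP => [lt|ge].
  by case: eqP => //; lia.
rewrite -lcoef_series series_fdb; have [fdbj fdbj1] := lmonic_fdb hD hser_monic j.
by case: eqP => [->|ne]; rewrite ?fdbj1 ?fdbj //; lia.
Qed.

Lemma KPvecE j i : KPvec D u j i = D (lcoef (series (KPcur D u j)) (- i.+1%:Z)).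
Proof. by rewrite /KPvec -lcoef_series (series_der _ hD) (lcoef_der hD). Qed.

Lemma vanish_above_KPcur j : vanish_above (lcoef (series (KPcur D u j))) j%:Z.
Proof. by move=> x lt; rewrite lcoef_series coef_KPcur; [case: eqP => //; lia | lia]. Qed.

Lemma span_S_rhs l a : in_span (series (S_rhs D l u a)).
Proof.
rewrite /S_rhs series_add series_big; apply: spanD; first exact: span_KPcur.
by apply: span_sum => m _; rewrite series_scale; apply/span_constM/span_KPcur.
Qed.

Lemma sum_mul_indicator_rev (a : nat -> K) (k x : nat) :
  \sum_(m < k) a m * (x == (k.-1 - m)%N)%:R = if (x < k)%N then a (k.-1 - x)%N else 0.
Proof.
case: ltnP => xk; last first.
  rewrite big1 // => i _; rewrite (_ : x == _ = false) ?mulr0 //.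
  by apply/eqP; have := ltn_ord i; lia.
have xk' : (k.-1 - x < k)%N by lia.
rewrite (bigD1 (Ordinal xk')) //= (_ : x == _ = true); last by apply/eqP; lia.
rewrite mulr1 big1 ?addr0 // => i neq; rewrite (_ : x == _ = false) ?mulr0 //.
apply/eqP => exi; move/eqP: neq; apply; apply: val_inj => /=.
by have := ltn_ord i; lia.
Qed.

(* Both sides of the defining equation of [S_l] are [z^(l+1) + sum_m a_m z^(l-m)]
   in nonnegative degrees, so the equation only constrains negative degrees. *)
Lemma coef_S_rhs l a x : -1 <= l -> 0 <= x ->
  coef (S_rhs D l u a) x = coef (S_lhs l a) x.
Proof.
move=> l1 x0; rewrite -!lcoef_series /S_rhs /S_lhs series_add series_big series_mul.
rewrite series_lsZ lcoefD lcoef_sum lcoef_zpowM !lcoef_series coef_KPcur //.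
under eq_bigr => i _ do rewrite series_scale lcoef_constM lcoef_series coef_KPcur //.
set k := absz (l + 1)%R; have lk : l = k%:Z - 1 by rewrite /k; lia.
have [xn ->] : exists xn : nat, x = xn%:Z by exists (absz x); lia.
under eq_bigr => i _ do rewrite eqz_nat.
rewrite sum_mul_indicator_rev eqz_nat /coef /= lk.
have [xk|xk|->] := ltngtP xn k.
- rewrite add0r ifT; last lia.
  rewrite ifF; last by apply/eqP; lia.
  by rewrite ifT; [congr a; lia | lia].
- by rewrite ifN ?addr0 //; lia.
- by rewrite addr0 !ifT //; [apply/eqP | ]; lia.
Qed.

Lemma in_S_spanE l a : -1 <= l ->
  in_S D l u a <-> in_span (lzpow K l * series (aser a)).
Proof.
move=> l1; rewrite /in_S series_eqP /S_lhs series_mul series_lsZ.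
split=> [->|sa]; first exact: span_S_rhs.
apply: (span_eq hD hser_monic sa (span_S_rhs l a)) => x x0.
by rewrite -series_lsZ -series_mul !lcoef_series coef_S_rhs.
Qed.

End KPCurrents.

Section KPTransfer.
Variables (K1 K2 : comNzRingType) (f : {rmorphism K1 -> K2}).
Variables (D1 : K1 -> K1) (D2 : K2 -> K2).
Hypotheses (hD1 : derivation D1) (hD2 : derivation D2).
Hypothesis fD : forall x, f (D1 x) = D2 (f x).

Lemma lmap_hser u : lmap f (series (hser u)) = series (hser (f \o u)).
Proof.
apply: lseriesP => k; rewrite lcoef_map !lcoef_series /coef /=.
by do ![case: ifP => _]; rewrite ?rmorph0 ?rmorph1.
Qed.

Lemma lmap_aser a : lmap f (series (aser a)) = series (aser (f \o a)).
Proof.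
apply: lseriesP => k; rewrite lcoef_map !lcoef_series /coef /=.
by do ![case: ifP => _]; rewrite ?rmorph0 ?rmorph1.
Qed.

Lemma lmap_nabla h g : lmap f (nabla D1 h g) = nabla D2 (lmap f h) (lmap f g).
Proof. by rewrite /nabla rmorphD rmorphM /= (lmap_der _ hD1 hD2 fD). Qed.

Lemma lmap_iter_nabla h g n :
  lmap f (iter n (nabla D1 h) g) = iter n (nabla D2 (lmap f h)) (lmap f g).
Proof. by elim: n => [|n IH] //=; rewrite lmap_nabla IH. Qed.

Lemma lmap_span h g : in_span D1 h g -> in_span D2 (lmap f h) (lmap f g).
Proof.
case=> N [c ->]; exists N, (f \o c); rewrite rmorph_sum; apply: eq_bigr => m _.
by rewrite rmorphM /= lmap_const lmap_iter_nabla rmorph1.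
Qed.

Lemma lmap_KPcur u j :
  lmap f (series (KPcur D1 u j)) = series (KPcur D2 (f \o u) j).
Proof.
apply: (span_eq hD2 (hser_monic (f \o u))).
- by rewrite -lmap_hser; apply/lmap_span/span_KPcur.
- exact: span_KPcur.
- by move=> x x0; rewrite lcoef_map !lcoef_series !coef_KPcur // rmorph_nat.
Qed.

Lemma lmap_S_rhs l u a :
  lmap f (series (S_rhs D1 l u a)) = series (S_rhs D2 l (f \o u) (f \o a)).
Proof.
rewrite /S_rhs !series_add !series_big rmorphD rmorph_sum /= lmap_KPcur.
congr (_ + _); apply: eq_bigr => m _.
by rewrite !series_scale rmorphM /= lmap_const lmap_KPcur.
Qed.

Lemma lmap_S_lhs l a : lmap f (series (S_lhs l a)) = series (S_lhs l (f \o a)).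
Proof. by rewrite /S_lhs !series_mul rmorphM /= !series_lsZ lmap_zpow lmap_aser. Qed.

Lemma in_S_map l u a : in_S D1 l u a -> in_S D2 l (f \o u) (f \o a).
Proof. by rewrite /in_S !series_eqP -lmap_S_lhs -lmap_S_rhs => ->. Qed.

Lemma KPvec_map u j i : KPvec D2 (f \o u) j i = f (KPvec D1 u j i).
Proof.
rewrite /KPvec -!lcoef_series !series_der // -lmap_KPcur.
by rewrite -(lmap_der _ hD1 hD2 fD) lcoef_map.
Qed.

End KPTransfer.

Section Gauge.
Variables (K : comNzRingType) (D : K -> K) (eps : K).
Hypotheses (hD : derivation D) (eps2 : eps * eps = 0) (Deps : D eps = 0).
Variables h H : lseries K.
Local Notation e := (lconst eps).
Local Notation h' := (h + e * lder D H).

Lemma lconst_eps2 : e * e = 0.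
Proof. by rewrite -rmorphM eps2 rmorph0. Qed.

(* Conjugation by the unit [1 + eps H], which acts as [exp (eps H)] since
   [eps^2 = 0]. *)
Lemma nabla_gauge g :
  nabla D h' g = (1 - e * H) * nabla D h ((1 + e * H) * g).
Proof.
have dG : lder D (1 + e * H) = e * lder D H.
  rewrite (lderD hD) (lderM hD) -(rmorph1 (@lconst K)) !(lder_const hD) Deps (der1 hD).
  by rewrite rmorph0 mul0r !add0r.
apply/eqP; rewrite -subr_eq0 /nabla (lderM hD) dG; apply/eqP.
transitivity (e * e * (H * H * (lder D g + h * g) + H * lder D H * g)); first by ring.
by rewrite lconst_eps2 !mul0r.
Qed.

Lemma gauge_unit : (1 - e * H) * (1 + e * H) = 1.
Proof.
transitivity (1 - e * e * (H * H)); first by ring.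
by rewrite lconst_eps2 mul0r subr0.
Qed.

Lemma iter_nabla_gauge n g :
  iter n (nabla D h') g = (1 - e * H) * iter n (nabla D h) ((1 + e * H) * g).
Proof.
elim: n => [|n IH] /=; first by rewrite mulrA gauge_unit mul1r.
by rewrite IH nabla_gauge [(1 + _) * (_ * _)]mulrA [(1 + e * H) * _]mulrC gauge_unit mul1r.
Qed.

Lemma nabla_epsM k f : nabla D k (e * f) = e * nabla D k f.
Proof. by rewrite (nabla_constM _ hD) Deps rmorph0 mul0r add0r. Qed.

Lemma eps_iter_nabla n g : e * iter n (nabla D h') g = e * iter n (nabla D h) g.
Proof.
elim: n => [|n IH] //=.
have -> : e * nabla D h' (iter n (nabla D h') g) = e * nabla D h (iter n (nabla D h') g).
  set X := iter n _ g; rewrite /nabla.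
  transitivity (e * (lder D X + h * X) + e * e * (lder D H * X)); first by ring.
  by rewrite lconst_eps2 mul0r addr0.
by rewrite -!nabla_epsM IH.
Qed.

Lemma span_eps g : in_span D h g -> in_span D h' (e * g).
Proof.
case=> N [c ->]; rewrite mulr_sumr; apply: span_sum => m _.
by rewrite mulrCA -eps_iter_nabla; apply/span_constM/span_constM/span_fdb.
Qed.

Lemma span_gauge g : in_span D h H -> in_span D h g -> in_span D h' ((1 - e * H) * g).
Proof.
move=> sH [N [c ->]]; rewrite mulr_sumr; apply: span_sum => m _.
rewrite mulrCA.
have -> : (1 - e * H) * iter m (nabla D h) 1 = iter m (nabla D h') (1 - e * H).
  by rewrite iter_nabla_gauge [(1 + e * H) * _]mulrC gauge_unit.
apply/span_constM/(span_iter_nabla hD)/spanB; first exact: (span_fdb _ _ 0).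
exact: span_eps.
Qed.

End Gauge.

Definition KPshift (K : comNzRingType) (D : K -> K) (eps : K) (u : nat -> K) (j : nat) :=
  fun i => u i + eps * KPvec D u j i.

Section KPDeformation.
Variables (K : comNzRingType) (D : K -> K) (eps : K).
Hypotheses (hD : derivation D) (eps2 : eps * eps = 0) (Deps : D eps = 0).
Variables (u : nat -> K) (j : nat).
Local Notation H := (series (KPcur D u j)).

Lemma hser_KPshift :
  series (hser (KPshift D eps u j)) = series (hser u) + lconst eps * lder D H.
Proof.
apply: lseriesP => k; rewrite lcoefD lcoef_constM (lcoef_der hD) !lcoef_series.
have [k0|kneg] := lerP 0 k.
  rewrite coef_KPcur // (der_natr hD) mulr0 addr0 /coef /=.
  by case: ifP => // _; case: ifP => // _; rewrite !ifF //; lia.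
have hser_neg (v : nat -> K) : coef (hser v) k = v (absz (- k)).-1.
  rewrite /coef /= ifT; last lia.
  by rewrite ifF ?ifT //; lia.
rewrite !hser_neg /KPshift (KPvecE hD) lcoef_series.
congr (_ + _ * D (coef _ _)); lia.
Qed.

Lemma aser_shift (a : nat -> K) B : vanish_above (lcoef B) 0 ->
  series (aser (fun i => a i + eps * lcoef B (- i%:Z))) = series (aser a) + lconst eps * B.
Proof.
move=> B0; apply: lseriesP => k; rewrite lcoefD lcoef_constM !lcoef_series /coef /=.
case: ifP => k1; last by rewrite B0 ?mulr0 ?addr0 //; lia.
case: ifP => [/eqP ->|_]; first by rewrite B0 ?mulr0 ?addr0.
case: ifP => k0; last by rewrite B0 ?mulr0 ?addr0 //; lia.
by congr (_ + _ * lcoef B _); lia.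
Qed.

Theorem in_S_KPshift (a : nat -> K) : exists a' : nat -> K,
  forall l, -1 <= l -> in_S D l u a -> in_S D l (KPshift D eps u j) a'.
Proof.
set A := series (aser a); set h := series (hser u).
have HA : vanish_above (lcoef (H * A)) j.+1%:Z.
  rewrite (_ : j.+1%:Z = j%:Z + 1); last lia.
  exact: vanish_aboveM (vanish_above_KPcur hD u (j := j)) (aser_monic a).1.
have [c Bc] := reduce_by_iter_nabla hD (hser_monic u) (aser_monic a) HA.
pose C g := \sum_(m < j.+1) lconst (c m) * iter m (nabla D h) g.
pose B := C A - H * A.
have B0 : vanish_above (lcoef B) 0 by move=> k lt; rewrite /B /C -opprB lcoefN Bc ?oppr0.
exists (fun i => a i + eps * lcoef B (- i%:Z)) => l l1.
rewrite !in_S_spanE // aser_shift // hser_KPshift => zA.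
have CzA : C (lzpow K l * A) = lzpow K l * C A.
  by rewrite /C mulr_sumr; apply: eq_bigr => m _; rewrite (iter_nabla_zpowM _ hD); ring.
have -> : lzpow K l * (A + lconst eps * B) =
    (1 - lconst eps * H) * (lzpow K l * A) + lconst eps * C (lzpow K l * A).
  by rewrite CzA /B; ring.
apply: spanD; first exact: (span_gauge hD eps2 Deps (span_KPcur hD u j) zA).
apply: (span_eps hD eps2 Deps); apply: span_sum => m _.
exact/span_constM/(span_iter_nabla hD).
Qed.

End KPDeformation.

Lemma in_qpolyK (R : comNzRingType) (h : {poly R}) (q : {poly %/ h}) :
  in_qpoly h (val q) = q.
Proof. by apply: val_inj; rewrite /= Pdiv.Ring.rmodp_small // size_mk_monic. Qed.

(* [{poly %/ 'X^2}] is the ring of dual numbers [R[t]/(t^2)], and [pi] reduces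
   [R[t]] onto it. *)
Section DualNumbers.
Variable R : comNzRingType.
Local Notation pi := (in_qpoly ('X^2 : {poly R})).

Lemma in_qpolyX2_decomp (p : {poly R}) :
  p = Pdiv.Ring.rdivp p 'X^2 * 'X^2 + val (pi p).
Proof. by rewrite /= mk_monic_Xn; apply: Pdiv.RingMonic.rdivp_eq; apply: monicXn. Qed.

Lemma in_qpolyX2 : pi 'X^2 = 0.
Proof.
by apply: val_inj; rewrite /= mk_monic_Xn; apply: Pdiv.RingMonic.rmodpp; apply: monicXn.
Qed.

Lemma in_qpolyX2_coef (p q : {poly R}) i : pi p = pi q -> (i < 2)%N -> p`_i = q`_i.
Proof.
move=> pq i2; rewrite (in_qpolyX2_decomp p) (in_qpolyX2_decomp q) pq !coefD.
by rewrite !coefMXn i2 !add0r.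
Qed.

End DualNumbers.

Section DualDerivation.
Variables (R : comNzRingType) (D : R -> R).
Hypothesis hD : derivation D.
Local Notation E := {poly %/ ('X^2 : {poly R})}.
Local Notation pi := (in_qpoly ('X^2 : {poly R})).
Local Notation Dp := (map_poly D : {poly R} -> {poly R}).

Lemma map_poly_der_const c : Dp c%:P = (D c)%:P.
Proof. by apply/polyP => i; rewrite coef_map_id0 ?(der0 hD) // !coefC; case: eqP; rewrite ?(der0 hD). Qed.

Lemma map_poly_der_Xn n : Dp 'X^n = 0.
Proof. by apply/polyP => i; rewrite coef_map_id0 ?(der0 hD) // coefXn coef0 (der_natr hD). Qed.

Definition dual_der (q : E) : E := pi (Dp (val q)).

Lemma dual_der_in_qpoly p : dual_der (pi p) = pi (Dp p).
Proof.
have hDp := map_poly_derivation hD.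
rewrite [in RHS](in_qpolyX2_decomp p) (derD hDp) (derM hDp) map_poly_der_Xn.
by rewrite mulr0 addr0 !rmorphD rmorphM /= in_qpolyX2 mulr0 add0r.
Qed.

Lemma dual_derivation : derivation dual_der.
Proof.
have hDp := map_poly_derivation hD.
split=> [p q|p q]; first by rewrite /dual_der /= (derD hDp) rmorphD.
rewrite -{1}(in_qpolyK p) -{1}(in_qpolyK q) -rmorphM dual_der_in_qpoly (derM hDp).
by rewrite rmorphD !rmorphM /= !in_qpolyK.
Qed.

Lemma dual_eps2 : pi 'X * pi 'X = 0.
Proof. by rewrite -rmorphM /= -expr2 in_qpolyX2. Qed.

Lemma dual_der_eps : dual_der (pi 'X) = 0.
Proof. by rewrite dual_der_in_qpoly -['X]expr1 map_poly_der_Xn rmorph0. Qed.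

Definition dual_const : {rmorphism R -> E} := pi \o polyC.

Lemma dual_const_der x : dual_const (D x) = dual_der (dual_const x).
Proof. by rewrite /= dual_der_in_qpoly map_poly_der_const. Qed.

End DualDerivation.

Section TangentLift.
Variables (R : comNzRingType) (D : R -> R).
Hypothesis hD : derivation D.
Local Notation pi := (in_qpoly ('X^2 : {poly R})).

Lemma ls_eq2_in_qpoly (F G : LS {poly R}) :
  lmap pi (series F) = lmap pi (series G) -> ls_eq2 F G.
Proof.
move=> eFG k i i2; apply: in_qpolyX2_coef i2.
by have := congr1 (fun s => lcoef s k) eFG; rewrite !lcoef_map !lcoef_series.
Qed.

Lemma KP_tangent_lift (u a : nat -> R) (j : nat) :
  exists aT : nat -> {poly R}, forall l, -1 <= l -> in_S D l u a ->
    ls_eq2 (S_lhs l aT)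
      (S_rhs (map_poly D) l (fun i => (u i)%:P + (KPvec D u j i)%:P * 'X) aT).
Proof.
have hE := dual_derivation hD.
have piD p : pi (map_poly D p) = dual_der D (pi p) by rewrite dual_der_in_qpoly.
have [a' Ha'] := in_S_KPshift hE (dual_eps2 R) (dual_der_eps hD) (dual_const R \o u) j
                               (dual_const R \o a).
exists (fun i => val (a' i)) => l l1 Sl; apply: ls_eq2_in_qpoly.
rewrite lmap_S_lhs (lmap_S_rhs (map_poly_derivation hD) hE piD).
have -> : pi \o (fun i => val (a' i)) = a' by apply: funext => i; rewrite /= in_qpolyK.
set hT := (fun i => _ + _).
have -> : pi \o hT = KPshift (dual_der D) (pi 'X) (dual_const R \o u) j.
  apply: funext => i; rewrite /KPshift (KPvec_map hD hE (dual_const_der hD)) /=.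
  by rewrite rmorphD rmorphM /= mulrC.
by apply/series_eqP; apply: Ha' l1 (in_S_map hD hE (dual_const_der hD) Sl).
Qed.

End TangentLift.

Theorem proposition3 (R : comNzRingType) (D : R -> R)
    (D_add : forall x y : R, D (x + y) = D x + D y)
    (D_mul : forall x y : R, D (x * y) = D x * y + x * D y)
    (l : int) (n : nat) :
  -1 <= l -> (1 <= n)%N ->
  forall u : nat -> R, in_Sp D l n u ->
  forall j : nat, (1 <= j)%N -> KP_tangent D l n j u.
Proof.
move=> l1 _ u [a [Sl Sln]] j _.
have [aT HaT] := KP_tangent_lift (conj D_add D_mul) u a j.
by exists aT; split; apply: HaT => //; lia.
Qed.
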